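(* Assume $d_2<h_2$ and that alternative (A) holds, namely: (i) $S_0,S_1,\dots,S_n$ are pairwise disjoint and their union is the set of all admissible $k$-words beginning with $b$; (ii) $\gamma=1$ and $\alpha_{i_1}=\cdots=\alpha_{i_n}=-1$; (iii) $B_1=\cdots=B_{n-1}$, this common block is simple, and $B_n$ differs from an initial segment of it exactly in the last symbol. Then $c^{11}_{d_1-i}=0$ for all integers $0<i<\delta$. If moreover $h_1\le h_2$, then $c^{21}_{d_1-i}=0$ for all integers $0\le i<\delta-r+1$.
   Context: Let $\mathcal{A}$ be a finite alphabet of $r$ symbols and $T=(T_{x,y})$ an irreducible $r\times r$ matrix with entries in $\{0,1\}$ (the directed graph on $\mathcal{A}$ with an edge $x\to y$ iff $T_{y,x}=1$ is strongly connected). An admissible $k$-word is a string $a_1\cdots a_k$ with $T_{a_{i+1},a_i}=1$ for all $i$. $V_k$ is the complex vector space with basis $\{[w]\}$ indexed by admissible $k$-words; $\psi_k:V_1\to V_k$ is linear with $\psi_k([a])$ the sum of $[w]$ over admissible $k$-words beginning with $a$; $T_k:V_k\to V_k$ is linear with $T_k([a_1\cdots a_k])=\sum[a_2\cdots a_kx]$ over symbols $x$ with $a_2\cdots a_kx$ admissible. For an admissible $k$-word $u=u_1\cdots u_k$, $h(u)$ is the least non-negative integer $h$ such that $u$ is the only admissible $k$-word beginning with $u_1\cdots u_{h+1}$. Fix admissible $(k+1)$-words $w_1=a_0\cdots a_k$, $w_2=b_0\cdots b_k$; put $d_1=h_1=h(a_1\cdots a_k)$, $h_2=h(b_1\cdots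 b_k)$. Let $W$ be the span of $\psi_k(V_1)$ and $T_k^i[a_1\cdots a_k]$, $0\le i\le d_1-1$ (these vectors together with the $\psi_k([a])$ form a basis of $W$, which is $T_k$-invariant). Let $d_2$ be the least non-negative integer with $T_k^{d_2}[b_1\cdots b_k]\in W$, and $\delta=h_2-d_2$. Write the unique expansion $T_k^{d_2}[b_1\cdots b_k]=\sum_{i=0}^{d_1-1}\alpha_iT_k^i[a_1\cdots a_k]+\psi_k(v)$, $v\in V_1$; let $b=b_{d_2+1}$, $\gamma$ the coefficient of $[b]$ in $v$, and $i_1<\cdots<i_n$ the indices with $\alpha_i\ne0$. Put $s_0=b_{d_2+1}\cdots b_{h_2+1}$, $s_m=a_{i_m+1}\cdots a_{h_1+1}$ ($1\le m\le n$), $S_m$ the set of admissible $k$-words beginning with $s_m$; blocks $B_m=a_{i_m+1}\cdots a_{i_{m+1}}$ ($1\le m\le n-1$), $B_n=a_{i_n+1}\cdots a_{h_1+1}$. A word is simple if it is not $A^e$ for a word $A$ and $e>1$. Correlation coefficients: for $0\le i\le d_1$, $c^{11}_{d_1-i}=1$ if $a_0a_1\cdots a_{k-i}=a_i\cdots a_k$ and $0$ otherwise; $c^{21}_{d_1-i}=1$ if $b_0\cdots b_{k-i}=a_i\cdots a_k$ and $0$ otherwise. *)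

(* Vectors in V_k are modelled as finite functions on
   k-tuples over the alphabet with complex (algC) coefficients; all vectors
   used are supported on admissible k-words. *)
From HB Require Import structures.
From mathcomp Require Import all_boot all_order all_algebra all_field.
Set Implicit Arguments. Unset Strict Implicit. Unset Printing Implicit Defensive.
Import GRing.Theory Num.Theory.
Local Open Scope ring_scope.

Section Defs.
Variables (A : finType) (T : A -> A -> bool).
(* T x y is the matrix entry T_{x,y} (1 iff true). *)

Definition admissible (s : seq A) : bool := sorted (fun x y => T y x) s.

Definition irreducible01 : Prop := forall x y : A, connect (fun x y => T y x) x y.

Definition sc (k : nat) (c : algC) (f : {ffun k.-tuple A -> algC}) : {ffun k.-tuple A -> algC} :=
  [ffun u => c * f u].

Definition bvec (k : nat) (s : seq A) : {ffun k.-tuple A -> algC} :=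
  [ffun u : k.-tuple A => ((val u == s) : nat)%:R].

Definition Tk_basis (k : nat) (w : seq A) : {ffun k.-tuple A -> algC} :=
  \sum_(x : A | admissible (rcons (behead w) x)) bvec k (rcons (behead w) x).

Definition Tk (k : nat) (f : {ffun k.-tuple A -> algC}) : {ffun k.-tuple A -> algC} :=
  \sum_(w : k.-tuple A | admissible w) sc (f w) (Tk_basis k w).

Definition psi_basis (k : nat) (a : A) : {ffun k.-tuple A -> algC} :=
  \sum_(w : k.-tuple A | admissible w && prefix [:: a] w) bvec k w.

Definition psi (k : nat) (v : {ffun A -> algC}) : {ffun k.-tuple A -> algC} :=
  \sum_(a : A) sc (v a) (psi_basis k a).

Definition hP (u : seq A) (h : nat) : bool :=
  [forall w : (size u).-tuple A,
     (admissible w && (take h.+1 w == take h.+1 u)) ==> (val w == u)].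

(* h(u): the least such h (it is at most |u| - 1 for admissible u) *)
Definition hword (u : seq A) : nat := find (hP u) (iota 0 (size u)).

Definition in_W (k : nat) (a' : seq A) (d1 : nat) (x : {ffun k.-tuple A -> algC}) : Prop :=
  exists (al : nat -> algC) (v : {ffun A -> algC}),
    x = \sum_(i < d1) sc (al i) (iter i (@Tk k) (bvec k a')) + psi k v.

Definition subw (w : seq A) (i j : nat) : seq A := drop i (take j.+1 w).

Definition Sset (k : nat) (s : seq A) : {set k.-tuple A} :=
  [set u : k.-tuple A | admissible u && prefix s u].

Definition simple_word (s : seq A) : Prop :=
  forall (B : seq A) (e : nat), (1 < e)%N -> s <> flatten (nseq e B).

Definition differs_last (s t : seq A) : Prop :=
  exists (p : seq A) (x y : A), prefix (rcons p x) t /\ s = rcons p y /\ x != y.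

End Defs.

(* By (A)(i) the words s_0, ..., s_n form a complete prefix code for the admissible
   k-words beginning with b, and by (A)(iii) every s_m with m > 0 equals B^(n-m) p y,
   a prefix of Z = B^(n-1) p followed by y, where p x is a prefix of B and x <> y.
   Since h2 > 0, the letter b_(h2) has a successor other than b_(h2+1); likewise
   a_(h1) has a successor other than y = a_(h1+1). Extending these forks to
   admissible k-words and locating the extensions in the code forces
   s_0 = Z b_(h2+1) with b_(h2+1) <> y, and shows that no letter of s_0 which could be
   followed by a letter other than y is followed by y. A period 0 < i < delta of w1,
   or an overlap of w2 with w1 shifted by i, would copy the fork a_(h1) -> y into
   s_0. For the overlap the copy lands inside s_0 because beyond position h1 every
   continuation of w1 is forced, so by irreducibility the tail of w1 after a_(h1)
   has no repeated letter and hence at most r letters. *)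

From HB Require Import structures.
From mathcomp Require Import all_boot all_order all_algebra all_field.
From mathcomp Require Import zify.
Set Implicit Arguments. Unset Strict Implicit. Unset Printing Implicit Defensive.

Section Prefix.
Variable X : eqType.
Implicit Types (u v s p B : seq X) (x y : X).

Lemma prefix_common u v s : prefix u s -> prefix v s -> size u <= size v -> prefix u v.
Proof. by rewrite !prefixE => /eqP us /eqP vs le_uv; rewrite -vs take_takel // us. Qed.

Lemma prefix_total u v s : prefix u s -> prefix v s -> prefix u v || prefix v u.
Proof.
move=> us vs; case: (leqP (size u) (size v)) => [le_uv | /ltnW le_vu].
  by rewrite (prefix_common us vs).
by rewrite (prefix_common vs us) ?orbT.
Qed.

Lemma prefix_size_eq u s : prefix u s -> size u = size s -> u = s.
Proof. by rewrite prefixE => /eqP us eq_size; rewrite -us eq_size take_size. Qed.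

Lemma prefix_comparable_size u v : prefix u v || prefix v u -> size u <= size v -> prefix u v.
Proof.
case/orP=> // vu le_uv.
by rewrite (prefix_size_eq vu) ?prefix_refl //; apply/eqP; rewrite eqn_leq le_uv size_prefix.
Qed.

Lemma prefix_rcons2 p x y : prefix (rcons p x) (rcons p y) -> x = y.
Proof. by move/prefix_size_eq; rewrite !size_rcons => /(_ erefl) /rcons_inj[]. Qed.

Lemma prefix_rcons_case u p x : prefix u (rcons p x) -> u = rcons p x \/ prefix u p.
Proof.
move=> up; case: (leqP (size u) (size p)) => [le_up | lt_pu].
  by right; apply: prefix_common up (prefix_rcons p x) le_up.
by left; apply: (prefix_size_eq up); apply/eqP; rewrite eqn_leq (size_prefix up) size_rcons.
Qed.

Lemma nth_prefix x0 u s i : prefix u s -> i < size u -> nth x0 u i = nth x0 s i.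
Proof. by rewrite prefixE => /eqP us lt_i; rewrite -us nth_take. Qed.

Lemma take_prefix n p s : prefix p s -> n <= size p -> take n s = take n p.
Proof. by rewrite prefixE => /eqP ps le_np; rewrite -ps take_takel. Qed.

Lemma prefix_flatten_nseq_cat B p i N :
  prefix p B -> i <= N -> prefix (flatten (nseq i B) ++ p) (flatten (nseq N B) ++ p).
Proof.
move=> pB; rewrite leq_eqVlt => /orP[/eqP-> | lt_iN]; first exact: prefix_refl.
rewrite -(subnKC (ltnW lt_iN)) nseqD flatten_cat -catA prefix_catr // eqxx /=.
have [d ->] : exists d, N - i = d.+1 by exists (N - i).-1; lia.
by rewrite /= -catA prefix_catl.
Qed.

Lemma not_prefix_flatten_nseq_cat B p x y i N :
  prefix (rcons p x) B -> x != y -> i <= N ->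
  ~~ prefix (flatten (nseq i B) ++ rcons p y) (flatten (nseq N B) ++ p).
Proof.
move=> pxB neq_xy; rewrite leq_eqVlt => /orP[/eqP-> | lt_iN].
  by apply/negP => /size_prefix; rewrite !size_cat size_rcons addnS ltnn.
rewrite -(subnKC (ltnW lt_iN)) nseqD flatten_cat -catA prefix_catr // eqxx /=.
have [d ->] : exists d, N - i = d.+1 by exists (N - i).-1; lia.
rewrite /= -catA; apply/negP => pyB.
have pxB' := prefix_catl (flatten (nseq d B) ++ p) pxB.
have /prefix_rcons2 eq_yx : prefix (rcons p y) (rcons p x).
  by apply: prefix_common pyB pxB' _; rewrite !size_rcons.
by move: neq_xy; rewrite eq_yx eqxx.
Qed.

End Prefix.

Section Subword.
Variables (X : finType) (x0 : X).
Implicit Type w : seq X.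

Lemma size_subw w i j : j < size w -> size (subw w i j) = j.+1 - i.
Proof. by move=> lt_j; rewrite /subw size_drop size_take; case: ifP => //; lia. Qed.

Lemma nth_subw w i j q : i + q <= j -> nth x0 (subw w i j) q = nth x0 w (i + q).
Proof. by move=> le_ij; rewrite /subw nth_drop nth_take. Qed.

Lemma last_subw w i j : i <= j -> j < size w -> last x0 (subw w i j) = nth x0 w j.
Proof.
move=> le_ij lt_j; rewrite -(nth_last x0) size_subw // nth_subw; last by lia.
by congr nth; lia.
Qed.

Lemma subw_rcons w i j : i <= j.+1 -> j.+1 < size w ->
  subw w i j.+1 = rcons (subw w i j) (nth x0 w j.+1).
Proof.
by move=> le_ij lt_j; rewrite /subw (take_nth x0) // drop_rcons // size_take lt_j.
Qed.

Lemma subw_cat w i l j : i <= l.+1 -> l <= j -> j < size w ->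
  subw w i j = subw w i l ++ subw w l.+1 j.
Proof.
move=> le_il le_lj lt_j; rewrite /subw.
rewrite -{1}(cat_take_drop l.+1 (take j.+1 w)) take_takel // drop_cat.
have sz : size (take l.+1 w) = l.+1 by rewrite size_take; case: ltnP => //; lia.
rewrite sz; case: ltnP => // le_li.
have -> : i = l.+1 by lia.
by rewrite subnn drop0 (@drop_oversize _ l.+1 (take l.+1 w)) ?sz.
Qed.

Lemma subw_flatten_nseq w B (j : nat -> nat) n h :
  (forall m, 0 < m < n -> j m <= j m.+1) -> (forall m, 0 < m <= n -> j m <= h) ->
  h < size w -> (forall m, 0 < m < n -> subw w (j m).+1 (j m.+1) = B) ->
  forall m, 0 < m <= n ->
  subw w (j m).+1 h = flatten (nseq (n - m) B) ++ subw w (j n).+1 h.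
Proof.
move=> j_mono j_le_h lt_h jB m /andP[m_gt0 le_mn].
have [d] : exists d, n - m = d by exists (n - m).
elim: d m m_gt0 le_mn => [|d IH] m m_gt0 le_mn nmd.
  have -> : m = n by lia.
  by rewrite subnn.
have lt_mn : m < n by lia.
rewrite nmd (subw_cat (l := j m.+1)) ?ltnS ?j_mono ?j_le_h ?m_gt0 ?lt_mn //.
rewrite jB ?m_gt0 // (IH m.+1) //; last by lia.
by rewrite (_ : n - m.+1 = d) ?catA //; lia.
Qed.

End Subword.

Section Admissible.
Variables (A : finType) (T : A -> A -> bool) (x0 : A).
Implicit Types (u w : seq A) (c x y z : A).

Definition fork x y : bool := [exists c, (c != y) && T c x].

Lemma forkP x y : reflect (exists2 c, c != y & T c x) (fork x y).
Proof.
by apply: (iffP existsP) => [[c /andP[ne Tc]] | [c ne Tc]]; exists c => //; apply/andP.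
Qed.

Lemma admissible_rcons u c :
  admissible T u -> 0 < size u -> T c (last x0 u) -> admissible T (rcons u c).
Proof. by case: u => // x u; rewrite /admissible /= rcons_path => -> _. Qed.

Lemma admissible_nth w j : admissible T w -> j.+1 < size w -> T (nth x0 w j.+1) (nth x0 w j).
Proof. by case: w => [|x w] //= /(pathP x0); apply. Qed.

Lemma admissible_subw w i j : admissible T w -> admissible T (subw w i j).
Proof. by move=> adm_w; apply/drop_sorted/take_sorted. Qed.

Lemma irreducible_succ x y : irreducible01 T -> T y x -> forall z, exists c, T c z.
Proof.
move=> irr Tyx z; case/connectP: (irr z x) => [[|c p]] /=; first by move=> _ <-; exists y.
by case/andP=> Tcz _ _; exists c.
Qed.

Lemma in_Sset k u (t : k.-tuple A) : (t \in Sset T k u) = admissible T t && prefix u t.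
Proof. by rewrite inE. Qed.

Lemma hP_size u h : size u <= h.+1 -> hP T u h.
Proof.
move=> le_uh; apply/forallP => t; apply/implyP => /andP[_ /eqP eq_take]; apply/eqP.
by rewrite -[val t](@take_oversize _ h.+1) ?size_tuple // eq_take take_oversize.
Qed.

Lemma hword_lt u : 0 < size u -> hword T u < size u.
Proof.
move=> u_gt0; suff : has (hP T u) (iota 0 (size u)) by rewrite has_find size_iota.
by apply/hasP; exists (size u).-1; [rewrite mem_iota; lia | apply: hP_size; lia].
Qed.

Lemma hword_leq u : hword T u <= (size u).-1.
Proof.
case: (posnP (size u)) => [u0 | u_gt0]; first by rewrite /hword u0.
by have := hword_lt u_gt0; lia.
Qed.

Lemma hP_hword u : 0 < size u -> hP T u (hword T u).
Proof.
move=> u_gt0; have := nth_find 0 (_ : has (hP T u) (iota 0 (size u))).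
by rewrite has_find size_iota nth_iota ?hword_lt //; apply.
Qed.

(* The minimality of h gives an admissible word that agrees with u strictly before
   position h but not at h. *)
Lemma hword_fork u : 0 < hword T u -> fork (nth x0 u (hword T u).-1) (nth x0 u (hword T u)).
Proof.
set h := hword T u => h_gt0.
have lt_hu : h < size u.
  apply: hword_lt; apply: leq_trans h_gt0 _.
  by have := find_size (hP T u) (iota 0 (size u)); rewrite size_iota.
have lt_h1h : h.-1 < h by rewrite prednK.
have := before_find 0 lt_h1h; rewrite nth_iota ?add0n; last by lia.
move/negbT/forallPn => [t]; rewrite negb_imply prednK // => /andP[/andP[adm_t /eqP take_t] t_u].
have /forallP/(_ t)/implyP hPt := hP_hword (ltn_trans h_gt0 lt_hu).
have szt : size t = size u by rewrite size_tuple.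
apply/forkP; exists (nth x0 t h).
  apply: contra t_u => /eqP t_h; apply: hPt; rewrite adm_t /=.
  by rewrite !(take_nth x0) ?szt // take_t t_h.
have <- : nth x0 t h.-1 = nth x0 u h.-1.
  by rewrite -(nth_take x0 (_ : h.-1 < h)) ?prednK // take_t nth_take ?prednK //; lia.
by rewrite -{1}(prednK h_gt0); apply: admissible_nth; rewrite ?prednK ?szt.
Qed.

Lemma hword_behead_fork w : 0 < hword T (behead w) ->
  fork (nth x0 w (hword T (behead w))) (nth x0 w (hword T (behead w)).+1).
Proof. by move=> h_gt0; have := hword_fork h_gt0; rewrite !nth_behead prednK. Qed.

(* A repeated letter would close a cycle of forced moves; by irreducibility this
   cycle reaches z, whose successor is not unique. *)
Lemma forced_tail_size (irr : irreducible01 T) w lo y z :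
  (forall j c, lo <= j -> j.+1 < size w -> T c (nth x0 w j) -> c = nth x0 w j.+1) ->
  T y z -> fork z y -> size w - lo <= #|A|.
Proof.
move=> forced Tyz /forkP[c ne_cy Tcz]; rewrite -size_drop.
suff /card_uniqP <- : uniq (drop lo w) by apply: max_card.
apply/negPn/negP => /(uniqPn x0) [i [j [lt_ij + +]]]; rewrite size_drop !nth_drop => lt_j w_ij.
have {}lt_j : j < size w - lo := lt_j.
pose onCycle x := exists2 l, i <= l < j & x = nth x0 w (lo + l).
have closed x d : onCycle x -> T d x -> onCycle d.
  case=> l /andP[le_il lt_lj] -> Tdx.
  have lt_l : (lo + l).+1 < size w by lia.
  rewrite (forced (lo + l) d (leq_addr _ _) lt_l Tdx) -addnS.
  case: (ltnP l.+1 j) => [lt_l1j | le_jl1]; first by exists l.+1 => //; lia.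
  by exists i; [rewrite leqnn | rewrite (_ : l.+1 = j) ?w_ij //; lia].
have [l /andP[le_il lt_lj] z_l] : onCycle z.
  case/connectP: (irr (nth x0 w (lo + i)) z) => p + ->.
  have : onCycle (nth x0 w (lo + i)) by exists i; rewrite ?leqnn.
  by elim: p (nth x0 w (lo + i)) => [|e p IH] x //= xC /andP[Tex /IH]; apply; apply: closed Tex.
have lt_l : (lo + l).+1 < size w by lia.
have c_l := forced _ c (leq_addr _ _) lt_l (_ : T c _); rewrite -z_l in c_l.
have y_l := forced _ y (leq_addr _ _) lt_l (_ : T y _); rewrite -z_l in y_l.
by move: ne_cy; rewrite c_l // y_l // eqxx.
Qed.

Definition avoids y u : Prop :=
  forall q, q.+1 < size u -> fork (nth x0 u q) y -> nth x0 u q.+1 != y.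

Lemma avoids_rcons y u z : avoids y (rcons u z) -> avoids y u.
Proof.
move=> av q lt_q; have := av q; rewrite size_rcons ltnS (ltnW lt_q) !nth_rcons lt_q.
by rewrite (ltnW lt_q); apply.
Qed.

Lemma avoids_subw_shift y w w' l r i h :
  avoids y (subw w l r) -> take (size w - i) w = drop i w' -> r < size w ->
  l <= h - i < r -> i <= h -> h.+1 < size w ->
  fork (nth x0 w' h) y -> nth x0 w' h.+1 != y.
Proof.
move=> av shift lt_r /andP[le_l lt_hr] le_ih lt_h fork_h.
have nth_shift j : j < size w - i -> nth x0 w j = nth x0 w' (i + j).
  by move=> lt_j; rewrite -(nth_take x0 lt_j) shift nth_drop.
have e0 : nth x0 (subw w l r) (h - i - l) = nth x0 w' h.
  rewrite nth_subw (_ : l + _ = h - i); try lia.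
  by rewrite nth_shift ?subnKC //; lia.
have e1 : nth x0 (subw w l r) (h - i - l).+1 = nth x0 w' h.+1.
  rewrite nth_subw (_ : l + _ = (h - i).+1); try lia.
  by rewrite nth_shift; [congr nth; lia | lia].
by rewrite -e1; apply: av; [rewrite size_subw //; lia | rewrite e0].
Qed.


Section Successors.
Hypothesis succ : forall z, exists c, T c z.

Lemma Sset_inhabited k u :
  admissible T u -> 0 < size u <= k -> exists t : k.-tuple A, t \in Sset T k u.
Proof.
move=> adm_u /andP[u_gt0 le_uk].
suff [U szU /andP[admU uU]] : exists2 U, size U == k & admissible T U && prefix u U.
  by exists (Tuple szU); rewrite in_Sset admU.
have [d] : exists d, k - size u = d by exists (k - size u).
elim: d u adm_u u_gt0 le_uk => [|d IH] u adm_u u_gt0 le_uk kud.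
  by exists u; rewrite ?adm_u ?prefix_refl //; apply/eqP; lia.
case: u adm_u u_gt0 le_uk kud => // a u adm_u _ le_uk kud.
have [c Tc] := succ (last a u).
have adm_uc : admissible T (rcons (a :: u) c) by rewrite /admissible /= rcons_path; apply/andP.
have [|||U szU /andP[admU ucU]] := IH _ adm_uc; rewrite ?size_rcons //; try lia.
by exists U; rewrite // admU (prefix_trans (prefix_rcons _ c) ucU).
Qed.

Lemma hword_forced u j c : admissible T u -> hword T u <= j -> j.+1 < size u ->
  T c (nth x0 u j) -> c = nth x0 u j.+1.
Proof.
move=> adm_u le_hj lt_ju Tc; apply/eqP/negPn/negP => ne_c.
have sz_take : size (take j.+1 u) = j.+1 by rewrite size_take lt_ju.
have adm_v : admissible T (rcons (take j.+1 u) c).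
  apply: admissible_rcons; first exact: take_sorted.
    by rewrite sz_take.
  by rewrite (take_nth x0) ?last_rcons // ltnW.
have [|t] := Sset_inhabited (k := size u) adm_v; first by rewrite size_rcons sz_take.
rewrite in_Sset => /andP[adm_t vt].
have t_u : val t = u.
  apply/eqP; move/forallP/(_ t): (hP_hword (ltn_trans (ltn0Sn j) lt_ju)).
  rewrite adm_t (take_prefix (prefix_trans (prefix_rcons _ c) vt)) ?sz_take //.
  by rewrite take_takel // eqxx => /implyP; apply.
move: ne_c; rewrite -t_u -(nth_prefix x0 vt) ?size_rcons ?sz_take //.
by rewrite nth_rcons sz_take ltnn !eqxx.
Qed.

Lemma hword_behead_forced w j c : admissible T w -> hword T (behead w) < j ->
  j.+1 < size w -> T c (nth x0 w j) -> c = nth x0 w j.+1.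
Proof.
move=> adm_w lt_hj lt_jw Tc; have adm_bw : admissible T (behead w).
  by rewrite -drop1; apply: drop_sorted.
have := @hword_forced (behead w) j.-1 c adm_bw; rewrite !nth_behead prednK; last by lia.
by apply; rewrite // ?size_behead; lia.
Qed.


End Successors.
End Admissible.

Section PrefixCode.
Variables (A : finType) (T : A -> A -> bool) (x0 : A).
Hypothesis succ : forall z, exists c, T c z.
Variables (k n : nat) (b : A) (s : nat -> seq A).
Hypothesis s_adm : forall m, m <= n -> admissible T (s m).
Hypothesis s_size : forall m, m <= n -> 0 < size (s m) <= k.
Hypothesis s_disj : forall m m', m <= n -> m' <= n -> m != m' ->
  [disjoint Sset T k (s m) & Sset T k (s m')].
Hypothesis s_cover : \bigcup_(m < n.+1) Sset T k (s m) = Sset T k [:: b].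

Lemma family_incomparable m m' : m <= n -> m' <= n -> m != m' -> ~~ prefix (s m) (s m').
Proof.
move=> le_m le_m' ne_m; apply/negP => pre.
have [t t_m'] := Sset_inhabited succ (s_adm le_m') (s_size le_m').
have t_m : t \in Sset T k (s m).
  by move: t_m'; rewrite !in_Sset => /andP[-> /(prefix_trans pre)].
by rewrite (disjointFr (s_disj le_m le_m' ne_m) t_m) in t_m'.
Qed.

Lemma family_head m : m <= n -> head x0 (s m) = b.
Proof.
move=> le_m; have [t t_m] := Sset_inhabited succ (s_adm le_m) (s_size le_m).
have : t \in Sset T k [:: b].
  by rewrite -s_cover; apply/bigcupP; exists (Ordinal (le_m : m < n.+1)).
rewrite !in_Sset in t_m * => /andP[_ bt]; case/andP: t_m => _ mt.
case/andP: (s_size le_m) => sm_gt0 _.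
by rewrite -nth0 (nth_prefix x0 mt) // -(nth_prefix x0 bt).
Qed.

Lemma family_covers u : admissible T u -> head x0 u = b -> 0 < size u <= k ->
  exists2 m, m <= n & prefix (s m) u || prefix u (s m).
Proof.
move=> adm_u head_u sz_u; have [t] := Sset_inhabited succ adm_u sz_u.
rewrite in_Sset => /andP[adm_t ut].
have : t \in Sset T k [:: b].
  rewrite in_Sset adm_t (prefix_trans _ ut) //.
  by case: (u) head_u sz_u => [|c u'] //= <- _; rewrite eqxx prefix0s.
rewrite -s_cover => /bigcupP[[m le_m] _]; rewrite in_Sset => /andP[_ mt].
by exists m; [|apply: prefix_total mt ut].
Qed.

Variables (p0 : seq A) (z0 : A).
Hypothesis s0E : s 0 = rcons p0 z0.
Hypothesis p0_gt0 : 0 < size p0.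

Lemma family_fork c : T c (last x0 p0) -> c != z0 ->
  exists2 m, 0 < m <= n & prefix (rcons p0 c) (s m).
Proof.
move=> Tc ne_cz.
have adm_pc : admissible T (rcons p0 c).
  apply: admissible_rcons Tc => //; apply: (prefix_sorted (prefix_rcons p0 z0)).
  by rewrite -s0E; apply: s_adm.
have head_pc : head x0 (rcons p0 c) = b.
  by rewrite -(family_head (leq0n n)) s0E; case: (p0) p0_gt0.
have sz_pc : 0 < size (rcons p0 c) <= k.
  by rewrite size_rcons -(size_rcons p0 z0) -s0E s_size.
have [m le_m cmp] := family_covers adm_pc head_pc sz_pc.
case: (posnP m) => [m0 | m_gt0].
  move: cmp; rewrite m0 s0E => /prefix_comparable_size; rewrite !size_rcons => /(_ (leqnn _)).
  by move/prefix_rcons2 => eq_zc; move: ne_cz; rewrite eq_zc eqxx.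
exists m; rewrite ?m_gt0 //.
case/orP: cmp => [/prefix_rcons_case[-> | mp0] | //]; first exact: prefix_refl.
have := family_incomparable le_m (leq0n n); rewrite -lt0n m_gt0 s0E => /(_ isT).
by rewrite (prefix_trans mp0 (prefix_rcons p0 z0)).
Qed.

Lemma family_size_gt0 : fork T (last x0 p0) z0 -> 0 < n.
Proof.
case/forkP => c ne_cz Tc; have [m /andP[m_gt0 le_m] _] := family_fork Tc ne_cz.
exact: leq_trans le_m.
Qed.

Variables (Z B p : seq A) (x y : A).
Hypothesis s1E : s 1 = rcons Z y.
Hypothesis pxB : prefix (rcons p x) B.
Hypothesis x_neq_y : x != y.
Hypothesis sE : forall m, 0 < m <= n -> s m = flatten (nseq (n - m) B) ++ rcons p y.
Hypothesis fork_p0 : fork T (last x0 p0) z0.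
Hypothesis fork_Z : fork T (last x0 Z) y.

Let n_gt0 : 0 < n := family_size_gt0 fork_p0.

Let Z_flatten : Z = flatten (nseq (n - 1) B) ++ p.
Proof. by apply: (@rcons_injl _ y); rewrite -s1E rcons_cat sE ?n_gt0. Qed.

Lemma family_shape m : 0 < m <= n -> exists2 v, prefix v Z & s m = rcons v y.
Proof.
move=> m_n; exists (flatten (nseq (n - m) B) ++ p); last by rewrite sE // rcons_cat.
rewrite Z_flatten; apply: prefix_flatten_nseq_cat; first exact: prefix_trans (prefix_rcons p x) pxB.
by lia.
Qed.

Lemma family_not_prefix_Z m : 0 < m <= n -> ~~ prefix (s m) Z.
Proof.
by move=> m_n; rewrite sE // Z_flatten; apply: not_prefix_flatten_nseq_cat pxB x_neq_y _; lia.
Qed.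

(* A word s m with m > 0 comparable with the deviation would have to read y at
   position j, or else be a prefix of Z. *)
Lemma deviation_meets_s0 j c : 0 < j <= size Z -> nth x0 (rcons Z y) j = y ->
  T c (nth x0 Z j.-1) -> c != y ->
  prefix (s 0) (rcons (take j Z) c) || prefix (rcons (take j Z) c) (s 0).
Proof.
move=> /andP[j_gt0 le_jZ] Zj_y Tc ne_cy.
have sz_take : size (take j Z) = j by rewrite size_takel.
have admZ : admissible T (rcons Z y) by rewrite -s1E; apply: s_adm.
have adm_u : admissible T (rcons (take j Z) c).
  apply: (admissible_rcons (x0 := x0)); rewrite ?sz_take //.
    by apply: prefix_sorted admZ; apply: prefix_trans (prefix_take _ _) (prefix_rcons _ _).
  by rewrite -(nth_last x0) sz_take nth_take ?prednK.
have head_u : head x0 (rcons (take j Z) c) = b.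
  rewrite -(family_head n_gt0) s1E -!nth0 !nth_rcons sz_take j_gt0 nth_take //.
  by rewrite (leq_trans j_gt0 le_jZ).
have sz_u : 0 < size (rcons (take j Z) c) <= k.
  by rewrite size_rcons sz_take; have := s_size n_gt0; rewrite s1E size_rcons; lia.
have [m le_m] := family_covers adm_u head_u sz_u.
case: (posnP m) => [-> // | m_gt0].
have m_n : 0 < m <= n by rewrite m_gt0.
have [v vZ smE] := family_shape m_n; rewrite smE => cmp.
case: (leqP (size (rcons (take j Z) c)) (size (rcons v y))) => [le_u | lt_vu].
  have uv : prefix (rcons (take j Z) c) (rcons v y).
    by apply: prefix_comparable_size le_u; rewrite orbC.
  have lt_ju : j < size (rcons (take j Z) c) by rewrite size_rcons sz_take.
  have := nth_prefix x0 uv lt_ju; rewrite (nth_rcons x0 (take j Z)) sz_take ltnn eqxx => c_v.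
  suff c_y : c = y by rewrite c_y eqxx in ne_cy.
  have le_jv : j <= size v by move: le_u; rewrite !size_rcons sz_take.
  rewrite c_v nth_rcons; case: ltngtP le_jv => // lt_jv _.
  rewrite (nth_prefix x0 vZ lt_jv) -Zj_y nth_rcons.
  by rewrite (leq_trans lt_jv (size_prefix vZ)).
have := prefix_comparable_size cmp (ltnW lt_vu); case/prefix_rcons_case => [eq_vu | vt].
  by move: lt_vu; rewrite eq_vu ltnn.
by move: (family_not_prefix_Z m_n); rewrite smE (prefix_trans vt (prefix_take _ _)).
Qed.

Lemma prefix_p0_Z : prefix p0 Z.
Proof.
case/forkP: fork_p0 => c ne_cz Tc.
have [m m_n pcm] := family_fork Tc ne_cz.
have [v vZ smE] := family_shape m_n; rewrite smE in pcm.
apply: prefix_trans vZ.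
apply: prefix_common (prefix_trans (prefix_rcons p0 c) pcm) (prefix_rcons v y) _.
by have := size_prefix pcm; rewrite !size_rcons.
Qed.

Lemma size_Z_le_p0 : size Z <= size p0.
Proof.
rewrite leqNgt; apply/negP => lt_p0Z.
case/forkP: fork_Z => c ne_cy Tc.
have := @deviation_meets_s0 (size Z) c; rewrite take_size nth_rcons ltnn eqxx nth_last.
move=> /(_ _ erefl Tc ne_cy); rewrite leqnn andbT (leq_ltn_trans (leq0n _) lt_p0Z) => /(_ isT).
move/prefix_comparable_size; rewrite s0E !size_rcons ltnS => /(_ (ltnW lt_p0Z)).
case/prefix_rcons_case => [/(congr1 size) | s0Z]; first by rewrite !size_rcons => -[]; lia.
have := family_incomparable (leq0n n) n_gt0 isT.
by rewrite s0E s1E (prefix_trans s0Z (prefix_rcons Z y)).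
Qed.

Lemma p0_eq_Z : p0 = Z.
Proof.
apply: prefix_size_eq prefix_p0_Z _; apply/eqP.
by rewrite eqn_leq (size_prefix prefix_p0_Z) size_Z_le_p0.
Qed.

Lemma z0_neq_y : z0 != y.
Proof.
case/forkP: fork_p0 => c ne_cz Tc.
have [m m_n pcm] := family_fork Tc ne_cz.
have [v vZ smE] := family_shape m_n; rewrite smE p0_eq_Z in pcm.
have /rcons_inj[_ <-] : rcons Z c = rcons v y.
  apply: (prefix_size_eq pcm); apply/eqP.
  by rewrite eqn_leq (size_prefix pcm) !size_rcons ltnS (size_prefix vZ).
by rewrite eq_sym.
Qed.

Lemma family_avoids : avoids T x0 y (s 0).
Proof.
move=> q; rewrite s0E p0_eq_Z size_rcons ltnS => lt_qZ /forkP[c ne_cy].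
rewrite !nth_rcons lt_qZ.
case: (ltngtP q.+1 (size Z)) lt_qZ => // [lt_q1Z | _] _ Tc; last exact: z0_neq_y.
apply/eqP => Zq_y.
have sz_take : size (take q.+1 Z) = q.+1 by rewrite size_takel // ltnW.
have := @deviation_meets_s0 q.+1 c (ltnW lt_q1Z); rewrite nth_rcons lt_q1Z.
move=> /(_ Zq_y Tc ne_cy); rewrite orbC s0E p0_eq_Z => /prefix_comparable_size.
rewrite !size_rcons sz_take ltnS (ltnW lt_q1Z) => /(_ isT) uZ.
have := nth_prefix x0 uZ (_ : q.+1 < size (rcons (take q.+1 Z) c)).
rewrite size_rcons sz_take ltnSn !nth_rcons sz_take ltnn eqxx lt_q1Z Zq_y => /(_ isT) c_y.
by rewrite c_y eqxx in ne_cy.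
Qed.

End PrefixCode.

Lemma nth_filter_iota_lt (P : pred nat) N m :
  m < size [seq i <- iota 0 N | P i] -> nth 0 [seq i <- iota 0 N | P i] m < N.
Proof. by move/(mem_nth 0); rewrite mem_filter mem_iota => /andP[_]. Qed.

Lemma nth_filter_iota_mono (P : pred nat) N m m' : m < m' ->
  m' < size [seq i <- iota 0 N | P i] ->
  nth 0 [seq i <- iota 0 N | P i] m < nth 0 [seq i <- iota 0 N | P i] m'.
Proof.
move=> lt_mm' lt_m'; apply: (sorted_ltn_nth ltn_trans); rewrite ?inE //.
  exact/(sorted_filter ltn_trans)/iota_ltn_sorted.
exact: ltn_trans lt_m'.
Qed.

Section AlternativeA.
Variables (A : finType) (T : A -> A -> bool) (k : nat) (x0 : A) (w1 w2 : seq A).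
Variables (d2 n : nat) (im : nat -> nat) (s : nat -> seq A).
Local Notation h1 := (hword T (behead w1)).
Local Notation h2 := (hword T (behead w2)).
Hypotheses (irr : irreducible01 T) (sz1 : size w1 = k.+1) (sz2 : size w2 = k.+1).
Hypotheses (adm1 : admissible T w1) (adm2 : admissible T w2).
Hypothesis im_mono : forall m, 0 < m < n -> im m < im m.+1.
Hypothesis im_lt_h1 : forall m, 0 < m <= n -> im m < h1.
Hypothesis lt_d2h2 : d2 < h2.
Hypothesis s0E : s 0 = subw w2 d2.+1 h2.+1.
Hypothesis smE : forall m, 0 < m -> s m = subw w1 (im m).+1 h1.+1.
Hypothesis s_disj : forall m m', m <= n -> m' <= n -> m != m' ->
  [disjoint Sset T k (s m) & Sset T k (s m')].
Hypothesis s_cover : \bigcup_(m < n.+1) Sset T k (s m) = Sset T k [:: nth x0 w2 d2.+1].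

Let lt_h2k : h2 < k.
Proof. by have := hword_leq T (behead w2); rewrite size_behead sz2; lia. Qed.

Let lt_h1k : h1 < k.
Proof. by have := hword_leq T (behead w1); rewrite size_behead sz1; have := lt_h2k; lia. Qed.

Let succ : forall z, exists c, T c z.
Proof.
apply: (irreducible_succ (x := nth x0 w2 0) (y := nth x0 w2 1) irr).
by apply: admissible_nth; rewrite // sz2; lia.
Qed.

Let fork_b : fork T (nth x0 w2 h2) (nth x0 w2 h2.+1).
Proof. by apply: hword_behead_fork; lia. Qed.

Let s0_rcons : s 0 = rcons (subw w2 d2.+1 h2) (nth x0 w2 h2.+1).
Proof. by rewrite s0E (subw_rcons x0) // ?sz2; lia. Qed.

Let s_adm m : m <= n -> admissible T (s m).
Proof. by case: m => [|m] _; rewrite ?s0E ?smE //; apply: admissible_subw. Qed.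

Let s_size m : m <= n -> 0 < size (s m) <= k.
Proof.
case: m => [|m] le_mn; rewrite ?s0E ?smE // size_subw ?sz1 ?sz2; try lia.
by have := @im_lt_h1 m.+1; lia.
Qed.

Let p0_gt0 : 0 < size (subw w2 d2.+1 h2).
Proof. by rewrite size_subw ?sz2; lia. Qed.

Let fork_p0 : fork T (last x0 (subw w2 d2.+1 h2)) (nth x0 w2 h2.+1).
Proof. by rewrite last_subw ?sz2 //; lia. Qed.

Lemma alternativeA_n_gt0 : 0 < n.
Proof.
exact: (family_size_gt0 succ (@s_adm) (@s_size) (@s_disj) s_cover s0_rcons p0_gt0 fork_p0).
Qed.

Variables (B p : seq A) (x y : A).
Hypothesis blocksE : forall m, 0 < m < n -> subw w1 (im m).+1 (im m.+1) = B.
Hypothesis lastE : subw w1 (im n).+1 h1.+1 = rcons p y.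
Hypothesis pxB : prefix (rcons p x) B.
Hypothesis x_neq_y : x != y.

Let n_gt0 := alternativeA_n_gt0.

Let sm_rcons m : 0 < m <= n -> s m = rcons (subw w1 (im m).+1 h1) (nth x0 w1 h1.+1).
Proof.
move=> m_n; rewrite smE ?(proj1 (andP m_n)) // (subw_rcons x0) // ?sz1.
  by have := im_lt_h1 m_n; lia.
by lia.
Qed.

Let yE : y = nth x0 w1 h1.+1.
Proof.
have := @sm_rcons n; rewrite smE // lastE n_gt0 leqnn => /(_ isT).
by case/rcons_inj.
Qed.

Let sE m : 0 < m <= n -> s m = flatten (nseq (n - m) B) ++ rcons p y.
Proof.
move=> m_n; rewrite smE ?(proj1 (andP m_n)) // -lastE; move: m_n.
apply: subw_flatten_nseq => [l l_n | l l_n | | //].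
- by have := im_mono l_n; lia.
- by have := im_lt_h1 l_n; lia.
- by rewrite sz1; lia.
Qed.

Let s1E : s 1 = rcons (subw w1 (im 1).+1 h1) y.
Proof. by rewrite sm_rcons ?n_gt0 ?yE. Qed.

Let fork_a : fork T (nth x0 w1 h1) y.
Proof. by rewrite yE; apply: hword_behead_fork; have := @im_lt_h1 1 n_gt0; lia. Qed.

Let fork_Z : fork T (last x0 (subw w1 (im 1).+1 h1)) y.
Proof. by rewrite last_subw ?sz1 //; have := @im_lt_h1 1 n_gt0; lia. Qed.

Let p0Z : subw w2 d2.+1 h2 = subw w1 (im 1).+1 h1.
Proof.
exact: (p0_eq_Z succ (@s_adm) (@s_size) (@s_disj) s_cover s0_rcons p0_gt0 s1E pxB x_neq_y (@sE)
  fork_p0 fork_Z).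
Qed.

Let s0_avoids : avoids T x0 y (subw w2 d2.+1 h2.+1).
Proof.
rewrite -s0E.
exact: (family_avoids succ (@s_adm) (@s_size) (@s_disj) s_cover s0_rcons p0_gt0 s1E pxB x_neq_y
  (@sE) fork_p0 fork_Z).
Qed.

Let delta_eq : h2 - d2 = h1 - im 1.
Proof.
by have := congr1 size p0Z; rewrite !size_subw ?sz1 ?sz2; have := @im_lt_h1 1 n_gt0; lia.
Qed.

Lemma no_self_overlap_w1 i : 0 < i < h2 - d2 -> i <= h1 -> take (k.+1 - i) w1 <> drop i w1.
Proof.
move=> /andP[i_gt0 lt_i] le_ih eq_take.
have avZ : avoids T x0 y (subw w1 (im 1).+1 h1).
  by apply: (avoids_rcons (z := nth x0 w2 h2.+1)); rewrite -p0Z -s0_rcons s0E.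
suff : nth x0 w1 h1.+1 != y by rewrite yE eqxx.
by apply: (avoids_subw_shift (i := i) avZ) fork_a; rewrite ?sz1 //; lia.
Qed.

Lemma no_overlap_w2_w1 : h1 <= h2 -> forall i, i + #|A| <= h2 - d2 -> i <= h1 ->
  take (k.+1 - i) w2 <> drop i w1.
Proof.
move=> le_h12 i le_i le_ih eq_take.
have tail : size w1 - h1.+1 <= #|A|.
  apply: (forced_tail_size (x0 := x0) irr _ (admissible_nth x0 adm2 _) fork_b).
    by move=> j c ? ?; apply: hword_behead_forced.
  by rewrite sz2; lia.
suff : nth x0 w1 h1.+1 != y by rewrite yE eqxx.
by apply: (avoids_subw_shift (i := i) s0_avoids) fork_a; rewrite ?sz1 ?sz2 //; lia.
Qed.

End AlternativeA.

Import GRing.Theory Num.Theory.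
Local Open Scope ring_scope.

Theorem corollary3p3 (A : finType) (T : A -> A -> bool) (k : nat) (x0 : A)
  (w1 w2 : seq A) (d2 : nat) (al : nat -> algC) (v : {ffun A -> algC}) :
  irreducible01 T ->
  size w1 = k.+1 -> size w2 = k.+1 -> admissible T w1 -> admissible T w2 ->
  let a' := behead w1 in
  let b' := behead w2 in
  let h1 := hword T a' in
  let h2 := hword T b' in
  let d1 := h1 in
  (* d2 is the least j with T_k^j [b_1...b_k] in W *)
  (forall j, (j < d2)%N -> ~ in_W T a' d1 (iter j (@Tk A T k) (bvec k b'))) ->
  (* the expansion of T_k^{d2} [b_1 ... b_k] *)
  iter d2 (@Tk A T k) (bvec k b') =
    \sum_(i < d1) sc (al i) (iter i (@Tk A T k) (bvec k a')) + psi T k v ->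
  let delta := (h2 - d2)%N in
  let b := nth x0 w2 d2.+1 in
  let I := [seq i <- iota 0 d1 | al i != 0] in
  let n := size I in
  let im (m : nat) := nth 0%N I m.-1 in
  let s (m : nat) := if m == 0%N then subw w2 d2.+1 h2.+1
                     else subw w1 (im m).+1 h1.+1 in
  let Bm (m : nat) := if (m < n)%N then subw w1 (im m).+1 (im m.+1)
                      else subw w1 (im n).+1 h1.+1 in
  (d2 < h2)%N ->
  (* (A)(i) *)
  (forall m m', (m <= n)%N -> (m' <= n)%N -> m != m' ->
     [disjoint Sset T k (s m) & Sset T k (s m')]) ->
  \bigcup_(m < n.+1) Sset T k (s m) = Sset T k [:: b] ->
  (* (A)(ii) *)
  v b = 1 ->
  (forall m, (0 < m <= n)%N -> al (im m) = -1) ->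
  (* (A)(iii) *)
  (exists B : seq A, simple_word B /\
     (forall m, (0 < m < n)%N -> Bm m = B) /\
     ((0 < n)%N -> differs_last (Bm n) B)) ->
  (* c^{11}_{d1-i} = 0 for 0 < i < delta *)
  (forall i, (0 < i < delta)%N -> (i <= d1)%N ->
     take (k.+1 - i) w1 <> drop i w1) /\
  (* if h1 <= h2, c^{21}_{d1-i} = 0 for 0 <= i < delta - r + 1 *)
  ((h1 <= h2)%N -> forall i, (i + #|A| <= delta)%N -> (i <= d1)%N ->
     take (k.+1 - i) w2 <> drop i w1).
Proof.
move=> irr sz1 sz2 adm1 adm2 a' b' h1 h2 d1 _ _ delta b I n im s Bm lt_d2h2 s_disj s_cover
  _ _ [B [_ [BmE BnE]]].
have im_mono m : (0 < m < n)%N -> (im m < im m.+1)%N.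
  by move=> m_n; apply: nth_filter_iota_mono; rewrite -/I -/n; lia.
have im_lt_h1 m : (0 < m <= n)%N -> (im m < h1)%N.
  by move=> m_n; apply: nth_filter_iota_lt; rewrite -/I -/n; lia.
have smE m : (0 < m)%N -> s m = subw w1 (im m).+1 h1.+1 by case: m.
have n_gt0 :=
  alternativeA_n_gt0 irr sz1 sz2 adm1 adm2 im_lt_h1 lt_d2h2 (erefl _) smE s_disj s_cover.
have [p [x [y [pxB [lastE x_neq_y]]]]] := BnE n_gt0; rewrite /Bm ltnn in lastE.
have blocksE m : (0 < m < n)%N -> subw w1 (im m).+1 (im m.+1) = B.
  by move=> m_n; rewrite -(BmE m m_n) /Bm (proj2 (andP m_n)).
split; first exact: (no_self_overlap_w1 irr sz1 sz2 adm1 adm2 im_mono im_lt_h1 lt_d2h2 (erefl _)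
  smE s_disj s_cover blocksE lastE pxB x_neq_y).
exact: (no_overlap_w2_w1 irr sz1 sz2 adm1 adm2 im_mono im_lt_h1 lt_d2h2 (erefl _) smE
  s_disj s_cover blocksE lastE pxB x_neq_y).
Qed.
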